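(* For real $s>1$ let $u_s(t):=t\big(\frac{s+t}{s-1}\big)^{s-1}$. For each $s>1$ the equation $u_s(t)=1$ has a unique solution $t=c(s)$ with $t\ge-1$; it is a simple solution and $c(s)\in(0,1)$. The function $c$ is $C^\infty$ on $(1,\infty)$, strictly decreasing, and $c(s)\to c_0$ as $s\to\infty$, where $c_0\approx0.278465$ is the unique real number with $c_0e^{c_0+1}=1$, $0<c_0<1$. In particular, for every even integer $s\ge2$, the negative real root of $\psi_s(z):=z^{s-1}(z+s)-(s-1)^{s-1}$ is $z=-s-c(s)$. *)

From Stdlib Require Import Reals.
From Coquelicot Require Import Coquelicot.
Open Scope R_scope.

(* u_s(t) = t * ((s+t)/(s-1))^(s-1), real exponent (meaningful for s > 1, t >= -1,
   where the base (s+t)/(s-1) is positive). *)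
Definition u (s t : R) : R := t * Rpower ((s + t) / (s - 1)) (s - 1).

Definition psi (n : nat) (z : R) : R :=
  z ^ (n - 1) * (z + INR n) - (INR n - 1) ^ (n - 1).

From Stdlib Require Import Reals Lra Lia Psatz ClassicalEpsilon.
From Coquelicot Require Import Coquelicot.
Open Scope R_scope.

(* For t > 0, u s t = exp (logu s t) with
   logu s t = ln t + (s - 1) ln ((s + t) / (s - 1)), which is strictly increasing
   both in t and in s, while u s t <= 0 for t <= 0.  So c s is the unique zero of
   logu s; it lies below 1 because logu s 1 > 0, and it decreases in s.  The bounds
   ln t + 1 + t - (1 + t)^2 / (s + t) <= logu s t < ln t + 1 + t squeeze c s
   towards the zero c0 of ln t + 1 + t, i.e. of t e^(t+1) = 1.
   Differentiability comes from Carathéodory slopes: subtracting the equations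
   logu s (c s) = 0 and logu s0 (c s0) = 0 writes c s - c s0 as (s - s0) times a
   function continuous at s0.  The derivative is built from c by ring operations,
   inverses and logarithms of positive functions, a class closed under
   differentiation, hence c is smooth.  Finally, for even n,
   psi n (- n - t) = (n - 1)^(n - 1) (u n t - 1). *)

Lemma ln_lt_sub_1 y : 0 < y -> y <> 1 -> ln y < y - 1.
Proof.
intros Hy Hy1.
pose proof (exp_ineq1 (ln y) (ln_neq_0 y Hy1 Hy)) as H.
rewrite exp_ln in H by exact Hy. lra.
Qed.

Lemma ln_le_sub_1 y : 0 < y -> ln y <= y - 1.
Proof.
intro Hy. pose proof (exp_ineq1_le (ln y)) as H.
rewrite exp_ln in H by exact Hy. lra.
Qed.

Lemma pow_opp_odd x j : (- x) ^ (2 * j + 1) = - x ^ (2 * j + 1).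
Proof. rewrite !pow_add, !pow_mult. replace ((- x) ^ 2) with (x ^ 2) by ring. ring. Qed.

Lemma ex_derive_continuity_pt f x : ex_derive f x -> continuity_pt f x.
Proof. intro H. apply continuity_pt_filterlim. exact (ex_derive_continuous f x H). Qed.

Lemma locally_pos_of_continuity_pt f x :
  continuity_pt f x -> 0 < f x -> locally x (fun y => 0 < f y).
Proof.
intros Hf Hpos.
apply (filter_imp (fun y => Rabs (f y - f x) < f x)).
- intros y Hy. apply Rabs_def2 in Hy. lra.
- exact (proj1 (continuity_pt_locally f x) Hf (mkposreal _ Hpos)).
Qed.

Lemma ball_R x e y : ball x e y <-> Rabs (y - x) < e.
Proof. reflexivity. Qed.

Definition slope (f : R -> R) (a d b : R) : R :=
  if Req_EM_T b a then d else (f b - f a) / (b - a).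

Lemma slope_eq f a d b : f b - f a = slope f a d b * (b - a).
Proof.
unfold slope. destruct (Req_EM_T b a) as [->|Hne]; [ring|field; lra].
Qed.

Lemma slope_at f a d : slope f a d a = d.
Proof. unfold slope. destruct (Req_EM_T a a); [reflexivity|lra]. Qed.

Lemma continuity_pt_slope f a d :
  derivable_pt_lim f a d -> continuity_pt (slope f a d) a.
Proof.
intros Hf. apply continuity_pt_locally. intros eps.
destruct (Hf eps (cond_pos eps)) as [delta Hdelta].
exists delta. intros b Hb. change R in b. apply ball_R in Hb.
rewrite slope_at. unfold slope. destruct (Req_EM_T b a) as [->|Hne].
- rewrite Rminus_eq_0, Rabs_R0. apply cond_pos.
- specialize (Hdelta (b - a) ltac:(lra) Hb).
  replace (a + (b - a)) with b in Hdelta by ring. exact Hdelta.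
Qed.

Lemma slope_ln_pos a b : 0 < a -> 0 < b -> 0 < slope ln a (/ a) b.
Proof.
intros Ha Hb. unfold slope. destruct (Req_EM_T b a) as [_|Hne].
- now apply Rinv_0_lt_compat.
- destruct (Rlt_or_le b a) as [Hlt|Hle].
  + assert (ln b < ln a) by (apply ln_increasing; lra).
    replace ((ln b - ln a) / (b - a)) with ((ln a - ln b) / (a - b)) by (field; lra).
    apply Rdiv_lt_0_compat; lra.
  + assert (ln a < ln b) by (apply ln_increasing; lra).
    apply Rdiv_lt_0_compat; lra.
Qed.

Lemma derivable_pt_lim_of_quotient (g Q : R -> R) (x0 : R) :
  locally x0 (fun x => x <> x0 -> (g x - g x0) / (x - x0) = Q x) ->
  continuity_pt Q x0 -> derivable_pt_lim g x0 (Q x0).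
Proof.
intros [d1 Hquot] HQ eps Heps.
destruct (proj1 (continuity_pt_locally _ _) HQ (mkposreal _ Heps)) as [d2 Hclose].
exists (mkposreal _ (Rmin_pos _ _ (cond_pos d1) (cond_pos d2))).
intros h Hh0 Hh. simpl in Hh.
assert (Hball : forall d : posreal, Rmin d1 d2 <= d -> ball x0 d (x0 + h)).
{ intros d Hd. apply ball_R. replace (x0 + h - x0) with h by ring. lra. }
specialize (Hclose (x0 + h) (Hball d2 (Rmin_r _ _))).
rewrite <- (Hquot (x0 + h)) in Hclose; [| apply Hball, Rmin_l | lra].
replace (x0 + h - x0) with h in Hclose by ring.
exact Hclose.
Qed.

Definition logu (s t : R) : R := ln t + (s - 1) * (ln (s + t) - ln (s - 1)).

Lemma u_exp_logu s t : 1 < s -> 0 < t -> u s t = exp (logu s t).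
Proof.
intros Hs Ht. unfold u, Rpower, logu.
rewrite ln_div, exp_plus, exp_ln by lra. reflexivity.
Qed.

Lemma u_eq_1 s t : 1 < s -> 0 < t -> u s t = 1 <-> logu s t = 0.
Proof.
intros Hs Ht. rewrite u_exp_logu by assumption. split; intro H.
- now rewrite <- (ln_exp (logu s t)), H, ln_1.
- now rewrite H, exp_0.
Qed.

Lemma u_nonpos s t : t <= 0 -> u s t <= 0.
Proof.
intro Ht. unfold u, Rpower.
pose proof (exp_pos ((s - 1) * ln ((s + t) / (s - 1)))). nra.
Qed.

Lemma is_derive_u s t : 1 < s -> - s < t ->
  is_derive (u s) t (Rpower ((s + t) / (s - 1)) (s - 1) * (1 + t * (s - 1) / (s + t))).
Proof.
intros Hs Ht. unfold u, Rpower. auto_derive.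
- apply Rdiv_lt_0_compat; lra.
- unfold Rdiv. field. lra.
Qed.

Lemma logu_increasing s t1 t2 : 1 < s -> 0 < t1 -> t1 < t2 -> logu s t1 < logu s t2.
Proof.
intros Hs Ht1 Ht12. unfold logu.
assert (ln t1 < ln t2) by (apply ln_increasing; lra).
assert (ln (s + t1) < ln (s + t2)) by (apply ln_increasing; lra).
nra.
Qed.

Lemma logu_1_pos s : 1 < s -> 0 < logu s 1.
Proof.
intro Hs. unfold logu. rewrite ln_1.
assert (ln (s - 1) < ln (s + 1)) by (apply ln_increasing; lra). nra.
Qed.

Lemma is_derive_logu_s s t : 1 < s -> 0 < t ->
  is_derive (fun s => logu s t) s (ln (s + t) - ln (s - 1) - (1 + t) / (s + t)).
Proof.
intros Hs Ht. unfold logu. auto_derive.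
- split; lra.
- unfold Rminus. field. lra.
Qed.

Lemma continuity_pt_logu_s s t : 1 < s -> 0 < t -> continuity_pt (fun s => logu s t) s.
Proof.
intros Hs Ht. apply ex_derive_continuity_pt. eexists. now apply is_derive_logu_s.
Qed.

Lemma logu_increasing_s s1 s2 t : 1 < s1 -> s1 < s2 -> 0 < t -> logu s1 t < logu s2 t.
Proof.
intros Hs1 Hs12 Ht.
destruct (MVT_cor2 (fun s => logu s t) (fun s => ln (s + t) - ln (s - 1) - (1 + t) / (s + t))
            s1 s2 Hs12) as [s [Hmvt Hs]].
- intros s Hs. apply is_derive_Reals, is_derive_logu_s; lra.
- (* [ln y < y - 1] at [y = (s - 1) / (s + t)] makes the slope positive *)
  assert (Hln : ln ((s - 1) / (s + t)) < (s - 1) / (s + t) - 1).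
  { apply ln_lt_sub_1; [apply Rdiv_lt_0_compat; lra|].
    intro Heq. apply Rdiv_diag_uniq in Heq. lra. }
  rewrite ln_div in Hln by lra.
  replace ((s - 1) / (s + t) - 1) with (- ((1 + t) / (s + t))) in Hln by (field; lra).
  nra.
Qed.

Lemma logu_lt s t : 1 < s -> 0 < t -> logu s t < ln t + (1 + t).
Proof.
intros Hs Ht. unfold logu.
assert (Hln : ln ((s + t) / (s - 1)) < (s + t) / (s - 1) - 1).
{ apply ln_lt_sub_1; [apply Rdiv_lt_0_compat; lra|].
  intro Heq. apply Rdiv_diag_uniq in Heq. lra. }
rewrite ln_div in Hln by lra.
replace ((s + t) / (s - 1) - 1) with ((1 + t) / (s - 1)) in Hln by (field; lra).
apply Rmult_lt_compat_l with (r := s - 1) in Hln; [|lra].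
replace ((s - 1) * ((1 + t) / (s - 1))) with (1 + t) in Hln by (field; lra).
lra.
Qed.

Lemma logu_ge s t : 1 < s -> 0 < t ->
  ln t + (1 + t) - (1 + t) ^ 2 / (s + t) <= logu s t.
Proof.
intros Hs Ht. unfold logu.
assert (Hln : ln ((s - 1) / (s + t)) <= (s - 1) / (s + t) - 1)
  by (apply ln_le_sub_1, Rdiv_lt_0_compat; lra).
rewrite ln_div in Hln by lra.
replace ((s - 1) / (s + t) - 1) with (- ((1 + t) / (s + t))) in Hln by (field; lra).
apply Rmult_le_compat_l with (r := s - 1) in Hln; [|lra].
replace ((s - 1) * - ((1 + t) / (s + t))) with ((1 + t) ^ 2 / (s + t) - (1 + t)) in Hln
  by (field; lra).
lra.
Qed.

Lemma logu_root_exists s : 1 < s -> exists t, 0 < t /\ logu s t = 0.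
Proof.
intro Hs.
assert (Hu1 : 1 < u s 1).
{ rewrite u_exp_logu by lra. rewrite <- exp_0 at 1. apply exp_increasing, logu_1_pos, Hs. }
destruct (Ranalysis5.IVT_interv (fun t => u s t - 1) 0 1) as [t [Ht Hroot]].
- intros t Ht. apply continuity_pt_minus.
  + apply ex_derive_continuity_pt. eexists. apply is_derive_u; lra.
  + apply continuity_pt_const. intros ? ?. reflexivity.
- lra.
- unfold u. lra.
- lra.
- assert (Hpos : 0 < t).
  { destruct (Rle_or_lt t 0) as [Hle|Hlt]; [|exact Hlt].
    pose proof (u_nonpos s t Hle). lra. }
  exists t. split; [exact Hpos|]. apply u_eq_1; lra.
Qed.

(* For s <= 1 this is an unspecified value of Hilbert's choice operator. *)
Definition c (s : R) : R := epsilon (inhabits 0) (fun t => 0 < t /\ logu s t = 0).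

Lemma c_spec s : 1 < s -> 0 < c s /\ logu s (c s) = 0.
Proof. intro Hs. unfold c. apply epsilon_spec, logu_root_exists, Hs. Qed.

Lemma c_lt_iff s t : 1 < s -> 0 < t -> c s < t <-> 0 < logu s t.
Proof.
intros Hs Ht. destruct (c_spec s Hs) as [Hc Hroot]. split; intro H.
- rewrite <- Hroot. now apply logu_increasing.
- destruct (Rtotal_order (c s) t) as [Hlt|[Heq|Hgt]]; [exact Hlt| |].
  + rewrite Heq in Hroot. lra.
  + pose proof (logu_increasing s t (c s) Hs Ht Hgt). lra.
Qed.

Lemma lt_c_iff s t : 1 < s -> 0 < t -> t < c s <-> logu s t < 0.
Proof.
intros Hs Ht. destruct (c_spec s Hs) as [Hc Hroot]. split; intro H.
- rewrite <- Hroot. now apply logu_increasing.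
- destruct (Rtotal_order t (c s)) as [Hlt|[Heq|Hgt]]; [exact Hlt| |].
  + rewrite <- Heq in Hroot. lra.
  + pose proof (logu_increasing s (c s) t Hs Hc Hgt). lra.
Qed.

Lemma c_lt_1 s : 1 < s -> c s < 1.
Proof. intro Hs. apply c_lt_iff, logu_1_pos; lra. Qed.

Lemma u_c s : 1 < s -> u s (c s) = 1.
Proof. intro Hs. destruct (c_spec s Hs). apply u_eq_1; assumption. Qed.

Lemma u_eq_1_c s t : 1 < s -> u s t = 1 -> t = c s.
Proof.
intros Hs Hu.
assert (Ht : 0 < t).
{ destruct (Rle_or_lt t 0) as [Hle|Hlt]; [|exact Hlt].
  pose proof (u_nonpos s t Hle). lra. }
apply u_eq_1 in Hu; [|assumption..].
destruct (Rtotal_order t (c s)) as [Hlt|[Heq|Hgt]]; [|exact Heq|].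
- pose proof (proj1 (lt_c_iff s t Hs Ht) Hlt). lra.
- pose proof (proj1 (c_lt_iff s t Hs Ht) Hgt). lra.
Qed.

Lemma is_derive_u_c_neq0 s : 1 < s -> exists d, is_derive (u s) (c s) d /\ d <> 0.
Proof.
intro Hs. destruct (c_spec s Hs) as [Hc _].
eexists. split; [apply is_derive_u; lra|].
pose proof (exp_pos ((s - 1) * ln ((s + c s) / (s - 1)))).
assert (0 < c s * (s - 1) / (s + c s)) by (apply Rdiv_lt_0_compat; nra).
unfold Rpower. nra.
Qed.

Lemma c_decreasing s1 s2 : 1 < s1 -> s1 < s2 -> c s2 < c s1.
Proof.
intros Hs1 Hs12. destruct (c_spec s1 Hs1) as [Hc1 Hroot1].
apply c_lt_iff; [lra|exact Hc1|].
rewrite <- Hroot1. now apply logu_increasing_s.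
Qed.

Lemma continuity_pt_c s0 : 1 < s0 -> continuity_pt c s0.
Proof.
intros Hs0. apply continuity_pt_locally. intros eps.
destruct (c_spec s0 Hs0) as [Hc0 Hroot0].
set (e := Rmin eps (c s0 / 2)).
assert (He : 0 < e) by (apply Rmin_pos; [apply cond_pos|lra]).
assert (e <= eps) by apply Rmin_l. assert (e <= c s0 / 2) by apply Rmin_r.
assert (Habove : locally s0 (fun s => 0 < logu s (c s0 + e))).
{ apply locally_pos_of_continuity_pt with (f := fun s => logu s (c s0 + e)).
  - apply continuity_pt_logu_s; lra.
  - rewrite <- Hroot0. apply logu_increasing; lra. }
assert (Hbelow : locally s0 (fun s => 0 < - logu s (c s0 - e))).
{ apply locally_pos_of_continuity_pt with (f := fun s => - logu s (c s0 - e)).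
  - apply continuity_pt_opp, continuity_pt_logu_s; lra.
  - rewrite <- Hroot0. pose proof (logu_increasing s0 (c s0 - e) (c s0)). lra. }
generalize (filter_and _ _ (open_gt 1 s0 Hs0) (filter_and _ _ Habove Hbelow)).
apply filter_imp. intros s [Hs [Hup Hlow]].
assert (c s < c s0 + e) by (apply c_lt_iff; lra).
assert (c s0 - e < c s) by (apply lt_c_iff; lra).
apply Rabs_def1; lra.
Qed.

(** * Differentiability of [c] *)

(* [- (d logu / ds) / (d logu / dt)] at [t = c s], i.e. implicit differentiation of
   [logu s (c s) = 0]. *)
Definition c' (s : R) : R :=
  c s * (s + c s) * / (s * (1 + c s)) * (ln (s - 1) + - ln (s + c s)) + c s * / s.

Definition shifted_xlnx (x : R) : R := (x - 1) * ln (x - 1).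

Lemma derivable_pt_lim_shifted_xlnx x : 1 < x ->
  derivable_pt_lim shifted_xlnx x (ln (x - 1) + 1).
Proof.
intros Hx. apply is_derive_Reals. unfold shifted_xlnx. auto_derive.
- lra.
- unfold Rminus. field. lra.
Qed.

Lemma logu_split s t : logu s t = ln t + (s - 1) * ln (s + t) - shifted_xlnx s.
Proof. unfold logu, shifted_xlnx. ring. Qed.

Lemma derivable_pt_lim_c s0 : 1 < s0 -> derivable_pt_lim c s0 (c' s0).
Proof.
intros Hs0. destruct (c_spec s0 Hs0) as [Hc0 Hroot0]. set (c0 := c s0) in *.
set (S1 := fun s => slope ln c0 (/ c0) (c s)).
set (S2 := fun s => slope ln (s0 + c0) (/ (s0 + c0)) (s + c s)).
set (S3 := slope shifted_xlnx s0 (ln (s0 - 1) + 1)).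
(* Expanding each difference in [logu s (c s) - logu s0 c0 = 0] by its slope gives
   [c s - c0 = (s - s0) * Q s] with [Q] continuous at [s0]. *)
set (Q := fun s => - (ln (s + c s) + (s0 - 1) * S2 s - S3 s) / (S1 s + (s0 - 1) * S2 s)).
assert (E1 : S1 s0 = / c0) by apply slope_at.
assert (E2 : S2 s0 = / (s0 + c0)) by apply slope_at.
assert (E3 : S3 s0 = ln (s0 - 1) + 1) by apply slope_at.
assert (Hden0 : 0 < S1 s0 + (s0 - 1) * S2 s0).
{ rewrite E1, E2. assert (0 < / c0) by (apply Rinv_0_lt_compat; lra).
  assert (0 < / (s0 + c0)) by (apply Rinv_0_lt_compat; lra). nra. }
replace (c' s0) with (Q s0).
2:{ unfold Q, c'. fold c0. rewrite E1, E2, E3. field. repeat split; nra. }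
apply derivable_pt_lim_of_quotient.
- apply (filter_imp (fun s => 1 < s)); [|exact (open_gt 1 s0 Hs0)].
  intros s Hs Hne. destruct (c_spec s Hs) as [Hc Hroot].
  assert (0 < S1 s) by (apply slope_ln_pos; lra).
  assert (0 < S2 s) by (apply slope_ln_pos; lra).
  assert (Hlin : (c s - c0) * (S1 s + (s0 - 1) * S2 s) =
                 - (s - s0) * (ln (s + c s) + (s0 - 1) * S2 s - S3 s)).
  { rewrite logu_split in Hroot, Hroot0.
    pose proof (slope_eq ln c0 (/ c0) (c s)) as D1.
    pose proof (slope_eq ln (s0 + c0) (/ (s0 + c0)) (s + c s)) as D2.
    pose proof (slope_eq shifted_xlnx s0 (ln (s0 - 1) + 1) s) as D3.
    fold (S1 s) in D1. fold (S2 s) in D2. fold S3 in D3. nra. }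
  unfold Q. field_simplify_eq; [fold c0; lra|split; [nra|lra]].
- assert (Hc := continuity_pt_c s0 Hs0).
  assert (Hsc : continuity_pt (fun s => s + c s) s0)
    by (apply continuity_pt_plus; [apply continuity_pt_id|exact Hc]).
  assert (Hln : continuity_pt (fun s => ln (s + c s)) s0).
  { apply (continuity_pt_comp (fun s => s + c s) ln); [exact Hsc|].
    apply ex_derive_continuity_pt. eexists. apply is_derive_ln. fold c0. lra. }
  assert (HS1 : continuity_pt S1 s0).
  { unfold S1. apply (continuity_pt_comp c); [exact Hc|].
    apply continuity_pt_slope, derivable_pt_lim_ln, Hc0. }
  assert (HS2 : continuity_pt (fun s => (s0 - 1) * S2 s) s0).
  { apply continuity_pt_mult; [apply continuity_pt_const; intros ? ?; reflexivity|].
    unfold S2. apply (continuity_pt_comp (fun s => s + c s)); [exact Hsc|].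
    apply continuity_pt_slope, derivable_pt_lim_ln. fold c0. lra. }
  assert (HS3 : continuity_pt S3 s0)
    by apply continuity_pt_slope, derivable_pt_lim_shifted_xlnx, Hs0.
  unfold Q. apply continuity_pt_div; [| |lra].
  + apply continuity_pt_opp, continuity_pt_minus; [apply continuity_pt_plus|]; assumption.
  + apply continuity_pt_plus; assumption.
Qed.

(** * Smoothness of [c] *)

(* Positivity on (1, +oo) keeps [/ f] and [ln f] differentiable there. *)
Inductive c_elementary : (R -> R) -> Prop :=
  | ce_const a : c_elementary (fun _ => a)
  | ce_id : c_elementary (fun s => s)
  | ce_c : c_elementary c
  | ce_opp f : c_elementary f -> c_elementary (fun s => - f s)
  | ce_plus f g : c_elementary f -> c_elementary g -> c_elementary (fun s => f s + g s)
  | ce_mult f g : c_elementary f -> c_elementary g -> c_elementary (fun s => f s * g s)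
  | ce_inv f : c_elementary f -> (forall s, 1 < s -> 0 < f s) ->
      c_elementary (fun s => / f s)
  | ce_ln f : c_elementary f -> (forall s, 1 < s -> 0 < f s) ->
      c_elementary (fun s => ln (f s)).

Lemma c_elementary_c' : c_elementary c'.
Proof.
unfold c'. repeat constructor; intros s Hs; destruct (c_spec s Hs) as [Hc _]; nra.
Qed.

Lemma c_elementary_derivable f : c_elementary f ->
  exists f', c_elementary f' /\ forall s, 1 < s -> derivable_pt_lim f s (f' s).
Proof.
induction 1 as [a| | |f _ [f' [Ef' Df]]|f g _ [f' [Ef' Df]] _ [g' [Eg' Dg]]
               |f g Ef [f' [Ef' Df]] Eg [g' [Eg' Dg]]|f Ef [f' [Ef' Df]] Hpos
               |f Ef [f' [Ef' Df]] Hpos].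
- exists (fun _ => 0). split; [constructor|]. intros s _. apply derivable_pt_lim_const.
- exists (fun _ => 1). split; [constructor|]. intros s _. apply derivable_pt_lim_id.
- exists c'. split; [exact c_elementary_c'|]. exact derivable_pt_lim_c.
- exists (fun s => - f' s). split; [repeat constructor; assumption|].
  intros s Hs. now apply derivable_pt_lim_opp, Df.
- exists (fun s => f' s + g' s). split; [repeat constructor; assumption|].
  intros s Hs. now apply derivable_pt_lim_plus; [apply Df|apply Dg].
- exists (fun s => f' s * g s + f s * g' s). split; [repeat constructor; assumption|].
  intros s Hs. now apply derivable_pt_lim_mult; [apply Df|apply Dg].
- exists (fun s => - (f' s * (/ f s * / f s))). split; [repeat constructor; assumption|].
  intros s Hs. specialize (Hpos s Hs).
  replace (- (f' s * (/ f s * / f s))) with (- f' s / f s ^ 2) by (field; lra).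
  apply is_derive_Reals, is_derive_inv; [apply is_derive_Reals, Df, Hs|lra].
- exists (fun s => / f s * f' s). split; [repeat constructor; assumption|].
  intros s Hs. apply (derivable_pt_lim_comp f ln); [apply Df, Hs|].
  apply derivable_pt_lim_ln, Hpos, Hs.
Qed.

Lemma c_elementary_ex_derive_n n f : c_elementary f ->
  exists g, c_elementary g /\
    forall s, 1 < s -> ex_derive_n f n s /\ Derive_n f n s = g s.
Proof.
intros Ef. induction n as [|n [g [Eg Hg]]].
- exists f. split; [exact Ef|]. intros s _. split; [exact I|reflexivity].
- destruct (c_elementary_derivable g Eg) as [g' [Eg' Dg]].
  exists g'. split; [exact Eg'|]. intros s Hs.
  assert (Hloc : locally s (fun x => g x = Derive_n f n x)).
  { apply (filter_imp (fun x => 1 < x)); [|exact (open_gt 1 s Hs)].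
    intros x Hx. symmetry. apply Hg, Hx. }
  split.
  + apply (ex_derive_ext_loc g); [exact Hloc|].
    exists (g' s). apply is_derive_Reals, Dg, Hs.
  + simpl. rewrite <- (Derive_ext_loc _ _ _ Hloc).
    apply is_derive_unique, is_derive_Reals, Dg, Hs.
Qed.

Lemma ex_derive_n_c n s : 1 < s -> ex_derive_n c n s.
Proof.
intro Hs. destruct (c_elementary_ex_derive_n n c ce_c) as [g [_ Hg]].
apply Hg, Hs.
Qed.

(** * The limit of [c] at infinity *)

Lemma xexp_increasing x y : 0 <= x -> x < y -> x * exp (x + 1) < y * exp (y + 1).
Proof.
intros Hx Hxy.
assert (exp (x + 1) < exp (y + 1)) by (apply exp_increasing; lra).
pose proof (exp_pos (x + 1)). nra.
Qed.

Lemma xexp_root_unique : exists! c0 : R, (0 < c0 < 1) /\ c0 * exp (c0 + 1) = 1.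
Proof.
assert (He2 : 1 < exp (1 + 1)) by (rewrite <- exp_0 at 1; apply exp_increasing; lra).
destruct (Ranalysis5.IVT_interv (fun x => x * exp (x + 1) - 1) 0 1) as [x [Hx Hroot]].
- intros a _. apply ex_derive_continuity_pt. auto_derive. exact I.
- lra.
- lra.
- lra.
- assert (x <> 0) by (intros ->; lra).
  assert (x <> 1) by (intros ->; lra).
  exists x. split; [split; lra|].
  intros y [Hy Hyroot].
  destruct (Rtotal_order x y) as [Hlt|[Heq|Hgt]]; [|exact Heq|].
  + pose proof (xexp_increasing x y ltac:(lra) Hlt). lra.
  + pose proof (xexp_increasing y x ltac:(lra) Hgt). lra.
Qed.

Lemma is_lim_c c0 : 0 < c0 -> c0 * exp (c0 + 1) = 1 -> is_lim c p_infty c0.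
Proof.
intros Hc0 Hroot.
assert (Hlog : ln c0 + (1 + c0) = 0).
{ rewrite <- (ln_exp (1 + c0)), <- ln_mult by (try apply exp_pos; lra).
  replace (1 + c0) with (c0 + 1) by ring. rewrite Hroot. apply ln_1. }
apply is_lim_spec. intros eps.
set (t := c0 + eps / 2).
assert (Ht : c0 < t) by (unfold t; pose proof (cond_pos eps); lra).
set (d := ln t + (1 + t)).
assert (Hd : 0 < d) by (unfold d; pose proof (ln_increasing c0 t Hc0 Ht); lra).
exists (Rmax 1 ((1 + t) ^ 2 / d)). intros s Hs.
assert (Hs1 : 1 < s) by (eapply Rle_lt_trans; [apply Rmax_l|exact Hs]).
assert (Hsd : (1 + t) ^ 2 / d < s) by (eapply Rle_lt_trans; [apply Rmax_r|exact Hs]).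
assert (Hlow : c0 < c s).
{ apply lt_c_iff; [lra..|]. pose proof (logu_lt s c0 Hs1 Hc0). lra. }
assert (Hup : c s < t).
{ apply c_lt_iff; [lra..|].
  assert ((1 + t) ^ 2 / (s + t) < d).
  { apply Rlt_div_l; [lra|]. apply Rlt_div_l in Hsd; [|exact Hd]. nra. }
  pose proof (logu_ge s t Hs1 ltac:(lra)). unfold d in *. lra. }
apply Rabs_def1; unfold t in *; lra.
Qed.

(** * The negative root of [psi] *)

Lemma psi_shift n t : (2 <= n)%nat -> Nat.Even n -> - INR n < t ->
  psi n (- INR n - t) = (INR n - 1) ^ (n - 1) * (u (INR n) t - 1).
Proof.
intros Hn [k Hk] Ht. set (s := INR n) in *.
assert (Hs : 2 <= s) by (apply le_INR in Hn; exact Hn).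
assert (Hodd : (n - 1 = 2 * (k - 1) + 1)%nat) by lia.
assert (Hu : u s t = t * (s + t) ^ (n - 1) / (s - 1) ^ (n - 1)).
{ unfold u. replace (s - 1) with (INR (n - 1)) at 2
    by (unfold s; rewrite minus_INR by lia; simpl; ring).
  rewrite Rpower_pow by (apply Rdiv_lt_0_compat; lra).
  unfold Rdiv. rewrite Rpow_mult_distr, pow_inv. ring. }
assert (Hpow : 0 < (s - 1) ^ (n - 1)) by (apply pow_lt; lra).
unfold psi. fold s. rewrite Hu.
replace (- s - t) with (- (s + t)) by ring.
rewrite Hodd, pow_opp_odd, <- Hodd. field. lra.
Qed.

Lemma psi_negative_root k : (1 <= k)%nat ->
  let n := (2 * k)%nat in
  - INR n - c (INR n) < 0 /\
  psi n (- INR n - c (INR n)) = 0 /\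
  (forall z, z < 0 -> psi n z = 0 -> z = - INR n - c (INR n)).
Proof.
intros Hk n.
assert (Hn : (2 <= n)%nat) by (unfold n; lia).
assert (Heven : Nat.Even n) by (exists k; reflexivity).
assert (Hs : 1 < INR n) by (apply le_INR in Hn; simpl in Hn; lra).
destruct (c_spec (INR n) Hs) as [Hc _].
split; [lra|]. split.
- rewrite psi_shift, u_c by (assumption || lra). ring.
- intros z Hz Hpsi.
  replace z with (- INR n - (- INR n - z)) in Hpsi by ring.
  rewrite psi_shift in Hpsi by (assumption || lra).
  assert (Hpow : 0 < (INR n - 1) ^ (n - 1)) by (apply pow_lt; lra).
  assert (Hu : u (INR n) (- INR n - z) = 1) by nra.
  apply u_eq_1_c in Hu; [lra|exact Hs].
Qed.

Theorem mainTheorem14 :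
  exists c : R -> R,
    (forall s : R, 1 < s ->
        -1 <= c s /\ u s (c s) = 1 /\
        (forall t : R, -1 <= t -> u s t = 1 -> t = c s) /\
        (exists d : R, is_derive (u s) (c s) d /\ d <> 0) /\
        0 < c s < 1) /\
    (forall (n : nat) (s : R), 1 < s -> ex_derive_n c n s) /\
    (forall s1 s2 : R, 1 < s1 -> s1 < s2 -> c s2 < c s1) /\
    (exists! c0 : R, (0 < c0 < 1) /\ c0 * exp (c0 + 1) = 1) /\
    (forall c0 : R, 0 < c0 < 1 -> c0 * exp (c0 + 1) = 1 ->
        is_lim c p_infty c0) /\
    (forall k : nat, (1 <= k)%nat ->
        let n := (2 * k)%nat in
        -INR n - c (INR n) < 0 /\
        psi n (-INR n - c (INR n)) = 0 /\
        (forall z : R, z < 0 -> psi n z = 0 -> z = -INR n - c (INR n))).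
Proof.
exists c. split; [|split; [|split; [|split; [|split]]]].
- intros s Hs. destruct (c_spec s Hs) as [Hc _].
  repeat split.
  + lra.
  + now apply u_c.
  + intros t _ Hu. now apply u_eq_1_c.
  + now apply is_derive_u_c_neq0.
  + exact Hc.
  + now apply c_lt_1.
- intros n s. apply ex_derive_n_c.
- exact c_decreasing.
- exact xexp_root_unique.
- intros c0 [Hc0 _]. now apply is_lim_c.
- exact psi_negative_root.
Qed.
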